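(* Let $z,r$ be real with $z^2+r^2\le1$ and $\rho=\frac12\begin{pmatrix}1+z&r\\ r&1-z\end{pmatrix}$. A state of the form $\rho'=\frac12\begin{pmatrix}1+z'&r'\\ r'&1-z'\end{pmatrix}$ with $z',r'$ real can be obtained as $\rho'=\Lambda(\rho)$ for some physically incoherent operation (PIO) $\Lambda$ on a qubit if and only if the point $(z',r')\in\mathbb{R}^2$ lies in the convex hull of the six points $(z,r),(z,-r),(-z,r),(-z,-r),(1,0),(-1,0)$.
   Context: $\{|0\rangle,|1\rangle\}$ is the computational basis of $\mathbb{C}^2$. A physically incoherent operation (PIO) is a convex combination of channels each having Kraus operators of the form $K_n=U_nP_n$, where $U_n=\sum_i e^{i\theta_{ni}}|\pi_n(i)\rangle\langle i|$ ($\pi_n$ a permutation of $\{0,1\}$, $\theta_{ni}$ real) and $\{P_n\}$ is a complete set of mutually orthogonal diagonal projectors (for a qubit: $\{|0\rangle\langle0|,|1\rangle\langle1|\}$ or $\{I\}$). *)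

(* Complex scalars: an arbitrary numClosedFieldType C
   (e.g. algC, or the complex numbers); "real" means  x \is Num.real. *)
From HB Require Import structures.
From mathcomp Require Import all_boot all_order all_algebra all_fingroup.
Set Implicit Arguments. Unset Strict Implicit. Unset Printing Implicit Defensive.
Import Order.TTheory GRing.Theory Num.Theory.
Local Open Scope ring_scope.

Section PIO.
Variable C : numClosedFieldType.

Definition adjmx (n m : nat) (A : 'M[C]_(m, n)) : 'M[C]_(n, m) :=
  (map_mx Num.conj A)^T.

(* U = sum_i e_i |pi(i)><i|, with |e_i| = 1 (e_i = exp(i theta_i)) *)
Definition phase_perm_mx (n : nat) (pi : 'S_n) (e : 'I_n -> C) : 'M[C]_n :=
  \matrix_(i < n, j < n) (if i == pi j then e j else 0).

Definition diag_projector (n : nat) (P : 'M[C]_n) : Prop :=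
  (forall i j : 'I_n, i != j -> P i j = 0) /\
  (forall i : 'I_n, P i i = 0 \/ P i i = 1).

Definition complete_orth_diag_projectors (n m : nat) (P : 'I_m -> 'M[C]_n)
  : Prop :=
  (forall a, diag_projector (P a)) /\
  (forall a b, a != b -> P a *m P b = 0) /\
  \sum_(a < m) P a = 1%:M.

Definition is_PIO_channel (n : nat) (L : 'M[C]_n -> 'M[C]_n) : Prop :=
  exists (m : nat) (P : 'I_m -> 'M[C]_n) (pi : 'I_m -> 'S_n)
         (e : 'I_m -> 'I_n -> C),
    complete_orth_diag_projectors P /\
    (forall a i, `|e a i| = 1) /\
    (forall X, L X = \sum_(a < m)
        (phase_perm_mx (pi a) (e a) *m P a) *m X
          *m adjmx (phase_perm_mx (pi a) (e a) *m P a)).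

Definition is_PIO (n : nat) (L : 'M[C]_n -> 'M[C]_n) : Prop :=
  exists (k : nat) (p : 'I_k -> C) (Ls : 'I_k -> 'M[C]_n -> 'M[C]_n),
    (forall j, 0 <= p j) /\ \sum_(j < k) p j = 1 /\
    (forall j, is_PIO_channel (Ls j)) /\
    (forall X, L X = \sum_(j < k) p j *: Ls j X).

Definition qstate (z r : C) : 'M[C]_2 :=
  2^-1 *: \matrix_(i < 2, j < 2)
    (if (i : nat) == 0%N then (if (j : nat) == 0%N then 1 + z else r)
     else (if (j : nat) == 0%N then r else 1 - z)).

Definition six_points (z r : C) : seq (C * C) :=
  [:: (z, r); (z, - r); (- z, r); (- z, - r); (1, 0); (-1, 0)].

Definition in_conv_hull (s : seq (C * C)) (x y : C) : Prop :=
  exists w : 'I_(size s) -> C,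
    (forall i, 0 <= w i) /\ \sum_(i < size s) w i = 1 /\
    x = \sum_(i < size s) w i * (nth (0, 0) s i).1 /\
    y = \sum_(i < size s) w i * (nth (0, 0) s i).2.

End PIO.

From mathcomp Require Import all_boot all_order all_algebra all_fingroup.
From mathcomp Require Import ring.
Set Implicit Arguments. Unset Strict Implicit. Unset Printing Implicit Defensive.
Import Order.TTheory GRing.Theory Num.Theory.
Local Open Scope ring_scope.

(* Write a qubit state through its Bloch coordinates (Y00 - Y11, Y01 + Y10),
   which are linear in Y; for qstate z r they are (z, r). On a qubit, up to zero
   projectors, either one projector is the identity, and the channel is
   conjugation by a phased permutation, sending (z, r) to (+-z, Re(w) r) with
   |w| = 1, or the two projectors are |0><0| and |1><1|, and the channel
   dephases and permutes, sending (z, r) to one of (+-z, 0), (+-1, 0). All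
   these points lie in the hull, hence so does any convex mixture of such
   channels. Conversely the six vertices are reached by the four reflections
   (z, r) -> (+-z, +-r), given by the swap and the phase flip diag(1, -1), and
   by the two resets to |0> and |1>; mixing them with the hull weights
   realizes every point of the hull. *)

Section Kraus.
Variables (C : numClosedFieldType) (n : nat).

Lemma sumr_natr_eq (m : nat) (c : 'I_m) (F : 'I_m -> C) :
  \sum_k (k == c)%:R * F k = F c.
Proof.
rewrite (bigD1 c) //= eqxx mul1r big1 ?addr0 // => k /negbTE ->.
by rewrite mul0r.
Qed.

Lemma adjmxE (m : nat) (A : 'M[C]_(m, n)) i j : adjmx A i j = (A j i)^*.
Proof. by rewrite !mxE. Qed.

Section KrausTerm.
Variables (pi : 'S_n) (e : 'I_n -> C) (P : 'M[C]_n).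
Hypothesis P_diag : forall i j, i != j -> P i j = 0.

Local Notation K := (phase_perm_mx pi e *m P).
Local Notation s := (pi^-1)%g.

Lemma phase_perm_mulmx_diagE i k : K i k = (k == s i)%:R * (e k * P k k).
Proof.
rewrite mxE (bigD1 k) //= big1 ?addr0 => [|l kl]; last by rewrite P_diag ?mulr0.
rewrite mxE; have -> : (i == pi k) = (k == s i).
  by apply/eqP/eqP => [->|->]; rewrite ?permK ?permKV.
by case: eqP; rewrite ?mul1r ?mul0r.
Qed.

Lemma kraus_conj_entry (X : 'M[C]_n) i j :
  (K *m X *m adjmx K) i j = e (s i) * P (s i) (s i) * X (s i) (s j)
                            * (e (s j) * P (s j) (s j))^*.
Proof.
have KX l : (K *m X) i l = e (s i) * P (s i) (s i) * X (s i) l.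
  rewrite mxE -(sumr_natr_eq (s i) (fun k => e k * P k k * X k l)); apply: eq_bigr => k _.
  by rewrite phase_perm_mulmx_diagE; ring.
rewrite mxE -(sumr_natr_eq (s j) (fun l =>
  e (s i) * P (s i) (s i) * X (s i) l * (e l * P l l)^*)); apply: eq_bigr => l _.
by rewrite adjmxE phase_perm_mulmx_diagE KX rmorphM rmorph_nat /=; ring.
Qed.

End KrausTerm.

Lemma complete_projector_index (m : nat) (P : 'I_m -> 'M[C]_n) :
  complete_orth_diag_projectors P ->
  exists c : 'I_n -> 'I_m, forall a i, P a i i = (a == c i)%:R.
Proof.
case=> P_proj [P_orth P_sum].
suff /fin_all_exists [c Pc] : forall i, exists c, forall a, P a i i = (a == c)%:R.
  by exists c => a i; apply: Pc.
move=> i.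
have [[c /eqP Pc]|] := altP (@existsP _ (fun a => P a i i == 1)).
  exists c => a; have [->|ca] := eqVneq a c; first by rewrite Pc.
  have := congr1 (fun M : 'M[C]_n => M i i) (P_orth c a _); rewrite eq_sym ca => /(_ isT).
  rewrite mxE (bigD1 i) //= big1 ?addr0 => [|j ji]; last first.
    by rewrite (proj1 (P_proj c)) 1?eq_sym ?mul0r.
  by rewrite Pc mul1r mxE => ->.
move=> /existsPn P1; have := congr1 (fun M : 'M[C]_n => M i i) P_sum.
rewrite summxE mxE eqxx big1 => [/eqP|a _]; first by rewrite eq_sym oner_eq0.
by case: (proj2 (P_proj a) i) => // Pa1; move: (P1 a); rewrite Pa1 eqxx.
Qed.

Definition pio_map (m : nat) (P : 'I_m -> 'M[C]_n) (pi : 'I_m -> 'S_n)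
    (e : 'I_m -> 'I_n -> C) (X : 'M[C]_n) : 'M[C]_n :=
  \sum_(a < m) (phase_perm_mx (pi a) (e a) *m P a) *m X
                 *m adjmx (phase_perm_mx (pi a) (e a) *m P a).

Lemma pio_map_channel (m : nat) (P : 'I_m -> 'M[C]_n) pi e :
  complete_orth_diag_projectors P -> (forall a i, `|e a i| = 1) ->
  is_PIO_channel (pio_map P pi e).
Proof. by move=> hP he; exists m, P, pi, e. Qed.

Lemma delta_projectors_complete :
  complete_orth_diag_projectors (fun a : 'I_n => delta_mx a a : 'M[C]_n).
Proof.
split; [|split].
- move=> a; split=> [i j ij|i]; rewrite mxE; last by case: (_ && _); [right|left].
  by case: andP => // -[/eqP ia /eqP ja]; rewrite ia ja eqxx in ij.
- by move=> a b ab; rewrite mul_delta_mx_cond (negbTE ab).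
- apply/matrixP => i j; rewrite summxE mxE (bigD1 i) //= mxE eqxx eq_sym.
  by rewrite big1 ?addr0 // => a ai; rewrite mxE eq_sym (negbTE ai).
Qed.

(* Kraus operators |t><a|, for a ranging over the basis. *)
Definition reset_pio (t : 'I_n) : 'M[C]_n -> 'M[C]_n :=
  pio_map (fun a => delta_mx a a) (fun a => tperm a t) (fun _ _ => 1).

Lemma reset_pioE (t : 'I_n) (X : 'M[C]_n) : reset_pio t X = \tr X *: delta_mx t t.
Proof.
have [P_diag _] := delta_projectors_complete.
apply/matrixP => i j; rewrite summxE !mxE.
have tpermE (a k : 'I_n) : (((tperm a t)^-1)%g k == a :> 'I_n) = (k == t :> 'I_n).
  by rewrite tpermV -[X in _ == X](tpermR a t) (inj_eq perm_inj).
under eq_bigr => a _ do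
  rewrite (kraus_conj_entry _ _ (proj1 (P_diag a))) !mxE !andbb !tpermE.
case: (i =P t) => [->|_]; last by rewrite big1 => [|a _]; rewrite !mulr0n ?mulr0 ?mul0r.
case: (j =P t) => [->|_]; last by rewrite big1 => [|a _]; rewrite ?andbF !mulr0n ?mulr0 ?conjC0 ?mulr0.
rewrite [RHS]mulr1 /mxtrace; apply: eq_bigr => a _.
have /eqP -> : ((tperm a t)^-1)%g t == a by rewrite tpermE.
by rewrite !mulr1 conjC1 mulr1 mul1r.
Qed.

Definition unitary_pio (s : 'S_n) (e : 'I_n -> C) : 'M[C]_n -> 'M[C]_n :=
  pio_map (fun _ : 'I_1 => 1%:M) (fun _ => s) (fun _ => e).

Lemma identity_projector_complete :
  complete_orth_diag_projectors (fun _ : 'I_1 => 1%:M : 'M[C]_n).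
Proof.
split; [|split]; last by rewrite big_ord1.
- move=> _; split=> [i j /negbTE ij|i]; rewrite mxE ?ij //.
  by rewrite eqxx; right.
- by move=> a b; rewrite !ord1 eqxx.
Qed.

Lemma unitary_pioE (s : 'S_n) (e : 'I_n -> C) (X : 'M[C]_n) i j :
  unitary_pio s e X i j =
  e ((s^-1)%g i) * X ((s^-1)%g i) ((s^-1)%g j) * (e ((s^-1)%g j))^*.
Proof.
have [P_diag _] := identity_projector_complete.
rewrite summxE big_ord1 (kraus_conj_entry _ _ (proj1 (P_diag ord0))) !mxE !eqxx.
by rewrite !mulr1.
Qed.

End Kraus.

Section Qubit.
Variable C : numClosedFieldType.

Lemma ord2P (i : 'I_2) : i = 0 \/ i = 1.
Proof. by case: i => [[|[|?]] ?] //; [left|right]; apply/val_inj. Qed.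

Lemma perm2P (s : 'S_2) : s = 1%g \/ s = tperm 0 1.
Proof.
have : s 0 != s 1 by rewrite (inj_eq perm_inj).
case: (ord2P (s 0)) (ord2P (s 1)) => s0 [] s1; rewrite s0 s1 // => _;
  [left|right]; apply/permP => i; case: (ord2P i) => ->;
  by rewrite ?perm1 ?tpermL ?tpermR.
Qed.

Definition bloch_z (Y : 'M[C]_2) : C := Y 0 0 - Y 1 1.
Definition bloch_x (Y : 'M[C]_2) : C := Y 0 1 + Y 1 0.

Section QubitKrausTerm.
Variables (pi : 'S_2) (e : 'I_2 -> C) (P X : 'M[C]_2).
Hypotheses (P_proj : diag_projector P) (e_unit : forall i, `|e i| = 1).

Local Notation K := (phase_perm_mx pi e *m P).

Let kraus_entryE k l :
  e k * P k k * X k l * (e l * P l l)^* = P k k * P l l * X k l * (e k * (e l)^*).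
Proof.
have [_ P01] := P_proj.
rewrite rmorphM /=; have -> : (P l l)^* = P l l by case: (P01 l) => ->; rewrite ?conjC0 ?conjC1.
ring.
Qed.

Let e_conj k : e k * (e k)^* = 1.
Proof. by rewrite -normCK e_unit expr1n. Qed.

Let P_idem k : P k k * P k k = P k k.
Proof. by case: (proj2 P_proj k) => ->; rewrite ?mul0r ?mulr1. Qed.

Lemma bloch_z_kraus :
  bloch_z (K *m X *m adjmx K) = (-1) ^+ odd_perm pi * (P 0 0 * X 0 0 - P 1 1 * X 1 1).
Proof.
rewrite /bloch_z !(kraus_conj_entry _ _ (proj1 P_proj)) !kraus_entryE !e_conj !P_idem.
case: (perm2P pi) => ->; rewrite ?invg1 ?perm1 ?tpermV ?tpermL ?tpermR;
  by rewrite ?odd_perm1 ?odd_tperm /=; ring.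
Qed.

Lemma bloch_x_kraus :
  bloch_x (K *m X *m adjmx K) =
  P 0 0 * P 1 1 * (X 0 1 * (e 0 * (e 1)^*) + X 1 0 * (e 0 * (e 1)^*)^*).
Proof.
rewrite /bloch_x !(kraus_conj_entry _ _ (proj1 P_proj)) !kraus_entryE rmorphM /= conjCK.
by case: (perm2P pi) => ->; rewrite ?invg1 ?perm1 ?tpermV ?tpermL ?tpermR; ring.
Qed.

End QubitKrausTerm.

Lemma bloch_z_sum (m : nat) (M : 'I_m -> 'M[C]_2) :
  bloch_z (\sum_a M a) = \sum_a bloch_z (M a).
Proof. by rewrite /bloch_z !summxE sumrB. Qed.

Lemma bloch_x_sum (m : nat) (M : 'I_m -> 'M[C]_2) :
  bloch_x (\sum_a M a) = \sum_a bloch_x (M a).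
Proof. by rewrite /bloch_x !summxE big_split. Qed.

Lemma bloch_zZ (c : C) (M : 'M[C]_2) : bloch_z (c *: M) = c * bloch_z M.
Proof. by rewrite /bloch_z !mxE mulrBr. Qed.

Lemma bloch_xZ (c : C) (M : 'M[C]_2) : bloch_x (c *: M) = c * bloch_x M.
Proof. by rewrite /bloch_x !mxE mulrDr. Qed.

(* c0 and c1 index the projectors containing |0> and |1>; coherence
   survives only when they coincide. *)
Lemma pio_map_bloch (m : nat) (P : 'I_m -> 'M[C]_2) (pi : 'I_m -> 'S_2)
    (e : 'I_m -> 'I_2 -> C) (X : 'M[C]_2) :
  complete_orth_diag_projectors P -> (forall a i, `|e a i| = 1) ->
  exists c0 c1 : 'I_m, let w := e c0 0 * (e c0 1)^* in
    bloch_z (pio_map P pi e X) =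
      (-1) ^+ odd_perm (pi c0) * X 0 0 - (-1) ^+ odd_perm (pi c1) * X 1 1 /\
    bloch_x (pio_map P pi e X) = (c0 == c1)%:R * (X 0 1 * w + X 1 0 * w^*).
Proof.
move=> hP e_unit; have [c Pc] := complete_projector_index hP.
exists (c 0), (c 1); split; rewrite /pio_map ?bloch_z_sum ?bloch_x_sum.
  rewrite (eq_bigr (fun a => (a == c 0)%:R * ((-1) ^+ odd_perm (pi a) * X 0 0)
                           - (a == c 1)%:R * ((-1) ^+ odd_perm (pi a) * X 1 1))).
    by rewrite sumrB !sumr_natr_eq.
  move=> a _; rewrite (bloch_z_kraus _ _ (proj1 hP a) (e_unit a)) !Pc.
  by move: ((-1) ^+ _) => sign; ring.
rewrite (eq_bigr (fun a => (a == c 0)%:R * ((c 0 == c 1)%:R *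
    (X 0 1 * (e a 0 * (e a 1)^*) + X 1 0 * (e a 0 * (e a 1)^*)^*)))).
  by rewrite sumr_natr_eq.
move=> a _; rewrite (bloch_x_kraus _ _ _ (proj1 hP a)) !Pc mulrA.
by case: (a =P c 0) => [->|]; rewrite ?mul1r ?mul0r.
Qed.

Lemma in_conv_hull_comb (s : seq (C * C)) (k : nat) (p x y : 'I_k -> C) :
  (forall j, 0 <= p j) -> \sum_j p j = 1 ->
  (forall j, in_conv_hull s (x j) (y j)) ->
  in_conv_hull s (\sum_j p j * x j) (\sum_j p j * y j).
Proof.
move=> p_ge0 p_sum /fin_all_exists [W hW].
have coordE (f : 'I_(size s) -> C) (u : 'I_k -> C) :
    (forall j, u j = \sum_i W j i * f i) ->
    \sum_j p j * u j = \sum_i (\sum_j p j * W j i) * f i.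
  move=> uE; under [RHS]eq_bigr => i _ do rewrite mulr_suml.
  rewrite exchange_big; apply: eq_bigr => j _.
  by rewrite uE mulr_sumr; apply: eq_bigr => i _; rewrite mulrA.
exists (fun i => \sum_j p j * W j i); split; [|split; [|split]].
- by move=> i; apply: sumr_ge0 => j _; apply: mulr_ge0 => //; case: (hW j).
- rewrite exchange_big -p_sum; apply: eq_bigr => j _.
  by rewrite -mulr_sumr; case: (hW j) => _ [-> _]; rewrite mulr1.
- by apply: coordE => j; case: (hW j) => _ [_ []].
- by apply: coordE => j; case: (hW j) => _ [_ []].
Qed.

Lemma Re_norm1_bound (w : C) : `|w| = 1 -> -1 <= 'Re w <= 1.
Proof.
move=> w1; rewrite -real_ler_norml ?Creal_Re // -w1.
exact: (leif_normC_Re_Creal w).1.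
Qed.

Section SixPointsHull.
Variables z r : C.

Lemma six_points_hull (w0 w1 w2 w3 w4 w5 x y : C) :
  0 <= w0 -> 0 <= w1 -> 0 <= w2 -> 0 <= w3 -> 0 <= w4 -> 0 <= w5 ->
  w0 + w1 + w2 + w3 + w4 + w5 = 1 ->
  x = w0 * z + w1 * z - w2 * z - w3 * z + w4 - w5 ->
  y = w0 * r - w1 * r + w2 * r - w3 * r ->
  in_conv_hull (six_points z r) x y.
Proof.
move=> ? ? ? ? ? ? w_sum -> ->.
exists (fun i : 'I_6 => nth 0 [:: w0; w1; w2; w3; w4; w5] i).
split; [by case=> [[|[|[|[|[|[|?]]]]]] ?] | split].
  by rewrite !big_ord_recl big_ord0 /= addr0 !addrA.
by split; rewrite !big_ord_recl big_ord0 /=; ring.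
Qed.

Lemma six_hull_sign_z (b : bool) (t : C) : -1 <= t <= 1 ->
  in_conv_hull (six_points z r) ((-1) ^+ b * z) (t * r).
Proof.
case/andP => t_ge t_le.
have w0_ge0 : 0 <= (1 + t) / 2 by rewrite divr_ge0 // -lerBlDl sub0r.
have w1_ge0 : 0 <= (1 - t) / 2 by rewrite divr_ge0 // subr_ge0.
case: b; rewrite ?expr1 ?expr0.
- apply: (six_points_hull (lexx 0) (lexx 0) w0_ge0 w1_ge0 (lexx 0) (lexx 0)) => //; by field.
- apply: (six_points_hull w0_ge0 w1_ge0 (lexx 0) (lexx 0) (lexx 0) (lexx 0)) => //; by field.
Qed.

Lemma six_hull_axis (b0 b1 : bool) :
  in_conv_hull (six_points z r)
    ((-1) ^+ b0 * (2^-1 * (1 + z)) - (-1) ^+ b1 * (2^-1 * (1 - z))) 0.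
Proof.
have half_ge0 : 0 <= 2^-1 :> C by rewrite invr_ge0.
have [o0 o1] : (0 : C) <= 0 /\ (0 : C) <= 1 by rewrite lexx ler01.
case: b0; case: b1; rewrite ?expr1 ?expr0.
- by apply: (six_points_hull o0 o0 half_ge0 half_ge0 o0 o0); field.
- by apply: (six_points_hull o0 o0 o0 o0 o0 o1); field.
- by apply: (six_points_hull o0 o0 o0 o0 o1 o0); field.
- by apply: (six_points_hull half_ge0 half_ge0 o0 o0 o0 o0); field.
Qed.

Lemma pio_channel_bloch_in_hull (L : 'M[C]_2 -> 'M[C]_2) : is_PIO_channel L ->
  in_conv_hull (six_points z r) (bloch_z (L (qstate z r))) (bloch_x (L (qstate z r))).
Proof.
case=> m [P [pi [e [hP [e_unit ->]]]]].
have [c0 [c1 [-> ->]]] := pio_map_bloch pi (qstate z r) hP e_unit.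
rewrite !mxE /=; case: (c0 =P c1) => [<- | _]; last by rewrite mul0r; apply: six_hull_axis.
set w := e c0 0 * (e c0 1)^*.
have w_unit : `|w| = 1 by rewrite normrM norm_conjC !e_unit mulr1.
have -> : 1 * (2^-1 * r * w + 2^-1 * r * w^*) = 'Re w * r by rewrite ReE; field.
rewrite -mulrBr (_ : 2^-1 * (1 + z) - 2^-1 * (1 - z) = z); last by field.
exact/six_hull_sign_z/Re_norm1_bound.
Qed.

Lemma pio_bloch_in_hull (L : 'M[C]_2 -> 'M[C]_2) : is_PIO L ->
  in_conv_hull (six_points z r) (bloch_z (L (qstate z r))) (bloch_x (L (qstate z r))).
Proof.
case=> k [p [Ls [p_ge0 [p_sum [Ls_pio ->]]]]].
rewrite bloch_z_sum bloch_x_sum.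
under eq_bigr do rewrite bloch_zZ; under [X in _ _ X]eq_bigr do rewrite bloch_xZ.
by apply: in_conv_hull_comb => // j; apply: pio_channel_bloch_in_hull.
Qed.

End SixPointsHull.

Lemma bloch_z_qstate (z r : C) : bloch_z (qstate z r) = z.
Proof. by rewrite /bloch_z !mxE /=; field. Qed.

Lemma bloch_x_qstate (z r : C) : bloch_x (qstate z r) = r.
Proof. by rewrite /bloch_x !mxE /=; field. Qed.

Lemma qstate_convex (k : nat) (w x y : 'I_k -> C) : \sum_j w j = 1 ->
  \sum_j w j *: qstate (x j) (y j) = qstate (\sum_j w j * x j) (\sum_j w j * y j).
Proof.
move=> w_sum; apply/matrixP => i l; rewrite summxE.
under eq_bigr do rewrite !mxE.
rewrite !mxE; case: (ord2P i) => ->; case: (ord2P l) => -> /=;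
  under eq_bigr do rewrite mulrCA; rewrite -mulr_sumr; congr (_ * _).
- by rewrite -[in RHS]w_sum -big_split; apply: eq_bigr => j _; rewrite mulrDr mulr1.
- by rewrite -[in RHS]w_sum -sumrB; apply: eq_bigr => j _; rewrite mulrBr mulr1.
Qed.

Definition reflection_pio (s f : bool) : 'M[C]_2 -> 'M[C]_2 :=
  unitary_pio (if s then tperm 0 1 else 1%g) (fun i => (-1) ^+ (f && (i == 1))).

Lemma reflection_pio_channel (s f : bool) : is_PIO_channel (reflection_pio s f).
Proof.
apply: pio_map_channel; first exact: identity_projector_complete.
by move=> _ i; rewrite normr_sign.
Qed.

Lemma reflection_pio_qstate (s f : bool) (z r : C) :
  reflection_pio s f (qstate z r) = qstate ((-1) ^+ s * z) ((-1) ^+ f * r).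
Proof.
apply/matrixP => i j; rewrite unitary_pioE.
case: s; case: f; case: (ord2P i) => ->; case: (ord2P j) => ->;
  rewrite ?invg1 ?perm1 ?tpermV ?tpermL ?tpermR !mxE /= ?expr0 ?expr1 ?conjC1 ?rmorphN1;
  ring.
Qed.

Lemma reset_pio_channel (t : 'I_2) : is_PIO_channel (reset_pio (C := C) t).
Proof.
apply: pio_map_channel; first exact: delta_projectors_complete.
by move=> _ _; rewrite normr1.
Qed.

Lemma reset_pio_qstate (t : 'I_2) (z r : C) :
  reset_pio (C := C) t (qstate z r) = qstate ((-1) ^+ t) 0.
Proof.
have tr1 : \tr (qstate z r) = 1 by rewrite /mxtrace big_ord_recl big_ord1 !mxE /=; field.
apply/matrixP => i j; rewrite reset_pioE tr1 scale1r.
case: (ord2P t) => ->; case: (ord2P i) => ->; case: (ord2P j) => ->;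
  by rewrite !mxE /= ?expr0 ?expr1; field.
Qed.

Definition six_channels : seq ('M[C]_2 -> 'M[C]_2) :=
  [:: reflection_pio false false; reflection_pio false true;
      reflection_pio true false; reflection_pio true true;
      reset_pio (C := C) 0; reset_pio (C := C) 1].

Lemma six_channels_PIO (j : 'I_6) : is_PIO_channel (nth id six_channels j).
Proof.
case: j => [[|[|[|[|[|[|?]]]]]] ?] //=;
  by [apply: reflection_pio_channel | apply: reset_pio_channel].
Qed.

Lemma six_channels_qstate (z r : C) (j : 'I_6) :
  nth id six_channels j (qstate z r) =
  qstate (nth (0, 0) (six_points z r) j).1 (nth (0, 0) (six_points z r) j).2.
Proof.
case: j => [[|[|[|[|[|[|?]]]]]] ?] //=;
  by rewrite ?reflection_pio_qstate ?reset_pio_qstate ?expr0 ?expr1 ?mul1r ?mulN1r.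
Qed.

End Qubit.

Theorem mainTheorem6 (C : numClosedFieldType) (z r z' r' : C)
  (hz : z \is Num.real) (hr : r \is Num.real)
  (hz' : z' \is Num.real) (hr' : r' \is Num.real)
  (hzr : z ^+ 2 + r ^+ 2 <= 1) :
  (exists L : 'M[C]_2 -> 'M[C]_2, is_PIO L /\ L (qstate z r) = qstate z' r')
  <-> in_conv_hull (six_points z r) z' r'.
Proof.
split=> [[L [L_pio LX]] | [w [w_ge0 [w_sum [-> ->]]]]].
  by have := pio_bloch_in_hull z r L_pio; rewrite LX bloch_z_qstate bloch_x_qstate.
exists (fun X => \sum_j w j *: nth id (six_channels C) j X); split.
  exists 6%N, w, (fun j => nth id (six_channels C) j).
  by do !split=> //; apply: six_channels_PIO.
under eq_bigr do rewrite six_channels_qstate.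
by rewrite qstate_convex.
Qed.
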